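(* In the setting described in the context, suppose $T$ and $A$ are irreducible. Then for $0<y<r_A$ and $\nu=0,1,\dots,\tau-1$, \[ \delta(\Gamma_A^*(y\omega_\tau^\nu))=\delta(\Gamma_A^*(y)),\qquad \mu(y\omega_\tau^\nu)=\mu(y)\Delta_M(\omega_\tau^\nu)^{-1},\qquad v(y\omega_\tau^\nu)=\Delta_M(\omega_\tau^\nu)v(y). \]
   Context: Let $M_0,M$ be positive integers. Consider a discrete-time Markov chain of M/G/1 type with state space $\{(0,j):1\le j\le M_0\}\cup\{(k,j):k\ge1,1\le j\le M\}$ and transition matrix in lexicographic order \[ T=\begin{pmatrix}B(0)&B(1)&B(2)&\cdots\\ C(0)&A(1)&A(2)&\cdots\\ O&A(0)&A(1)&\cdots\\ O&O&A(0)&\cdots\\ \vdots&\vdots&\vdots&\ddots\end{pmatrix}, \] with nonnegative blocks $A(k)$ ($M\times M$), $B(0)$, $B(k)$, $C(0)$ of compatible sizes, $A=\sum_{k\ge0}A(k)$ stochastic, $B(0)e+\sum_{k\ge1}B(k)e=e$. $A^*(z)=\sum_{k\ge0}z^kA(k)$ has convergence radius $r_A$; $\Gamma_A^*(z)=z^{-1}A^*(z)$. For a square complex matrix $X$, $\delta(X)$ is a maximum-modulus eigenvalue with nonnegative argument and maximal real part among maximum-modulus eigenvalues. Period $\tau$: in the Markov additive process on $\mathbb Z\times\{1,\dots,M\}$ moving from $(k_0,i)$ to $(k_0+k,j)$ with probability $[\Gamma_A(k)]_{i,j}$, where $\Gamma_A(k)=A(k+1)$ ($k\ge-1$), $O$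 ($k\le-2$), $\tau$ is the common value of $\gcd\{k\ne0:(0,j)\to(k,j)\}$ ($\to$ = reachable with positive probability in $\ge1$ steps). Fix $p:\{1,\dots,M\}\to\{0,\dots,\tau-1\}$ with $[\Gamma_A(k)]_{i,j}>0$ only if $k\equiv p(j)-p(i)\pmod\tau$, and set $\Delta_M(z)=\mathrm{diag}(z^{-p(1)},\dots,z^{-p(M)})$. For $z\in\mathbb C$, $\mu(z)$ and $v(z)$ denote left and right eigenvectors of $\Gamma_A^*(z)$ for the eigenvalue $\delta(\Gamma_A^*(z))$, normalized by $\mu(z)\Delta_M(z/|z|)e=1$ and $\mu(z)v(z)=1$. $\omega_\tau=\exp(2\pi\iota/\tau)$. *)

From HB Require Import structures.
From mathcomp Require Import all_boot all_order all_algebra.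
From mathcomp Require Import all_classical all_reals all_analysis.
From mathcomp Require Import complex.
Set Implicit Arguments. Unset Strict Implicit. Unset Printing Implicit Defensive.
Import Order.TTheory GRing.Theory Num.Theory.
Import numFieldTopology.Exports numFieldNormedType.Exports.
Local Open Scope ring_scope.
Local Open Scope complex_scope.

Inductive reach (S : Type) (r : S -> S -> Prop) : S -> S -> Prop :=
| reach1 x y : r x y -> reach r x y
| reachS x y z : r x y -> reach r y z -> reach r x z.

(* States: Lev0 i = (0,i), 1<=i<=M0 ; LevS n j = (n+1, j), 1<=j<=M. *)
Inductive mg1_state (M0 M : nat) : Type :=
| Lev0 of 'I_M0
| LevS of nat & 'I_M.

Section Defs.
Variable R : realType.
Local Notation C := (R[i]).

(* Transition matrix T of the M/G/1-type chain.
   B0 = B(0) (M0 x M0); Bs n = B(n+1) (M0 x M); C0 = C(0) (M x M0);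
   A k = A(k) (M x M). *)
Definition mg1_T (M0 M : nat) (B0 : 'M[R]_(M0, M0)) (Bs : nat -> 'M[R]_(M0, M))
  (C0 : 'M[R]_(M, M0)) (A : nat -> 'M[R]_M) (x y : mg1_state M0 M) : R :=
  match x, y with
  | Lev0 i, Lev0 j => B0 i j
  | Lev0 i, LevS n j => Bs n i j
  | LevS 0 i, Lev0 j => C0 i j
  | LevS _ _, Lev0 _ => 0
  | LevS m i, LevS n j => if (m <= n.+1)%N then A (n.+1 - m)%N i j else 0
  end.

Definition irreducible_mx (S : Type) (P : S -> S -> R) : Prop :=
  forall x y, reach (fun a b => 0 < P a b) x y.

Definition Asum (M : nat) (A : nat -> 'M[R]_M) : 'M[R]_M :=
  \matrix_(i, j) limn (series (fun k => A k i j)).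

Definition conv_radius (M : nat) (A : nat -> 'M[R]_M) : \bar R :=
  ereal_sup [set r%:E | r in [set r : R | 0 <= r /\
      forall i j, cvgn (series (fun k => r ^+ k * A k i j))]].

Definition Astar (M : nat) (A : nat -> 'M[R]_M) (z : C) : 'M[C]_M :=
  \matrix_(i, j)
    (limn (series (fun k => A k i j * complex.Re (z ^+ k))) +i*
     limn (series (fun k => A k i j * complex.Im (z ^+ k)))).

Definition GammaStar (M : nat) (A : nat -> 'M[R]_M) (z : C) : 'M[C]_M :=
  z^-1 *: Astar A z.

(* delta(X): maximum-modulus eigenvalue with nonnegative argument
   (i.e. Im >= 0, argument in (-pi, pi]) having maximal real part among
   the maximum-modulus eigenvalues with nonnegative argument. *)
Definition is_delta (M : nat) (X : 'M[C]_M) (d : C) : Prop :=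
  eigenvalue X d /\
  (forall e, eigenvalue X e -> `|e| <= `|d|) /\
  0 <= complex.Im d /\
  (forall e, eigenvalue X e -> `|e| = `|d| -> 0 <= complex.Im e ->
     complex.Re e <= complex.Re d).

Definition DeltaM (M : nat) (p : 'I_M -> nat) (z : C) : 'M[C]_M :=
  diag_mx (\row_j (z ^+ p j)^-1).

Definition onesC (M : nat) : 'cV[C]_M := const_mx 1.

Definition is_mu (M : nat) (A : nat -> 'M[R]_M) (p : 'I_M -> nat) (z : C)
  (mu : 'rV[C]_M) : Prop :=
  exists d, is_delta (GammaStar A z) d /\ mu *m GammaStar A z = d *: mu /\
    mu *m DeltaM p (z / `|z|) *m onesC M = 1%:M.

Definition is_v (M : nat) (A : nat -> 'M[R]_M) (z : C)
  (mu : 'rV[C]_M) (v : 'cV[C]_M) : Prop :=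
  exists d, is_delta (GammaStar A z) d /\ GammaStar A z *m v = d *: v /\
    mu *m v = 1%:M.

(* Markov additive process on Z x {1..M}: (k0,i) -> (k0+k,j) with
   probability [Gamma_A(k)]_{ij}, Gamma_A(k) = A(k+1) (k >= -1), O otherwise. *)
Definition Gamma_k (M : nat) (A : nat -> 'M[R]_M) (k : int) : 'M[R]_M :=
  match k with
  | Posz n => A n.+1
  | Negz 0 => A 0%N
  | Negz _ => 0
  end.

Definition map_step (M : nat) (A : nat -> 'M[R]_M) (x y : int * 'I_M) : Prop :=
  0 < Gamma_k A (y.1 - x.1) x.2 y.2.

Definition is_gcd_set (S : set int) (tau : nat) : Prop :=
  (forall k, S k -> (tau%:Z %| k)%Z) /\
  (forall d : int, (forall k, S k -> (d %| k)%Z) -> (d %| tau%:Z)%Z).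

Definition is_period (M : nat) (A : nat -> 'M[R]_M) (tau : nat) : Prop :=
  forall j : 'I_M, is_gcd_set
    [set k : int | k != 0 /\ reach (map_step A) (0, j) (k, j)] tau.

Definition omega (tau : nat) : C :=
  cos (2 * pi / tau%:R) +i* sin (2 * pi / tau%:R).

End Defs.

From HB Require Import structures.
From mathcomp Require Import all_boot all_order all_algebra.
From mathcomp Require Import all_classical all_reals all_analysis.
From mathcomp Require Import complex.
From mathcomp Require Import ring polyrcf.
Import Order.TTheory GRing.Theory Num.Theory.
Import numFieldTopology.Exports numFieldNormedType.Exports.

(* For real [y] in [(0, r_A)], [Gamma_A^*(y)] is a nonnegative matrix, irreducible
   because [A] is. By Perron-Frobenius (with the Perron root obtained as a
   Collatz-Wielandt infimum) its Perron root [r] has positive left and right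
   eigenvectors, every eigenvalue has modulus at most [r], and the [r]-eigenspaces
   are lines; hence [delta(Gamma_A^*(y)) = r].
   The periodic structure [A(k)_ij > 0 -> k - 1 = p(j) - p(i) (mod tau)] makes
   [Gamma_A^*(y w)] equal to [Delta Gamma_A^*(y) Delta^-1] with
   [Delta = Delta_M(w)], [w = omega_tau^nu]. Similar matrices have the same
   [delta], their eigenvectors correspond through [Delta], and the
   normalizations single out [mu(y w) = mu(y) Delta^-1] and [v(y w) = Delta v(y)]. *)

Set Implicit Arguments.
Unset Strict Implicit.
Unset Printing Implicit Defensive.

Local Open Scope ring_scope.

Lemma reach_snoc (S : Type) (rel : S -> S -> Prop) a b c :
  reach rel a b -> rel b c -> reach rel a c.
Proof.
elim=> [x y rxy | x y z rxy _ IH] rbc; first exact: reachS rxy (reach1 rbc).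
exact: reachS rxy (IH rbc).
Qed.

Lemma reach_rev (S : Type) (rel : S -> S -> Prop) a b :
  reach rel a b -> reach (fun x y => rel y x) b a.
Proof.
elim=> [x y rxy | x y z rxy _ IH]; first exact: reach1.
exact: reach_snoc IH rxy.
Qed.

Lemma reach_mono (S : Type) (r1 r2 : S -> S -> Prop) a b :
  (forall x y, r1 x y -> r2 x y) -> reach r1 a b -> reach r2 a b.
Proof.
move=> r12; elim=> [x y rxy | x y z rxy _ IH]; first exact/reach1/r12.
exact: reachS (r12 _ _ rxy) IH.
Qed.

Lemma reach_trmx (R : numDomainType) n (G : 'M[R]_n) i j :
  reach (fun a b => 0 < G a b) j i -> reach (fun a b => 0 < G^T a b) i j.
Proof. by move=> rji; apply: reach_mono (reach_rev rji) => a b; rewrite mxE. Qed.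

Lemma ler_sum_term (R : numDomainType) (I : finType) (F : I -> R) i :
  (forall j, 0 <= F j) -> F i <= \sum_j F j.
Proof. by move=> F0; rewrite (bigD1 i) //= lerDl sumr_ge0. Qed.

Lemma mx_neq0_entry (V : zmodType) m n (B : 'M[V]_(m, n)) :
  B != 0 -> exists i j, B i j != 0.
Proof.
move=> B0; have /existsP [i /existsP [j Bij]] : [exists i, exists j, B i j != 0].
  apply: contraR B0 => /existsPn nz; apply/eqP/matrixP => i j.
  by have /existsPn /(_ j) /negPn /eqP -> := nz i; rewrite mxE.
by exists i, j.
Qed.

Lemma adj_unitmx (R : comUnitRingType) n (B : 'M[R]_n.+1) :
  B \in unitmx -> \adj B = \det B *: invmx B.
Proof. by move=> U; rewrite -[\adj B](mulKmx U) mul_mx_adj mul_mx_scalar. Qed.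

(** * Perron-Frobenius theory *)

Section PerronFrobeniusReal.
Variables (R : realType) (n : nat) (G : 'M[R]_n.+1).
Hypothesis G_ge0 : forall i j, 0 <= G i j.
Local Notation I := 'I_n.+1.

Definition mulGv (u : I -> R) (i : I) := \sum_j G i j * u j.

Lemma mulGv_ge0 u : (forall i, 0 <= u i) -> forall i, 0 <= mulGv u i.
Proof. by move=> u0 i; apply: sumr_ge0 => j _; rewrite mulr_ge0. Qed.

Lemma mulGv_le u w : (forall i, u i <= w i) -> forall i, mulGv u i <= mulGv w i.
Proof. by move=> uw i; apply: ler_sum => j _; rewrite ler_wpM2l. Qed.

Lemma mulGvZ c u i : mulGv (fun j => c * u j) i = c * mulGv u i.
Proof. by rewrite /mulGv mulr_sumr; apply: eq_bigr => j _; rewrite mulrCA. Qed.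

Lemma mulGvB u w i : mulGv (fun j => u j - w j) i = mulGv u i - mulGv w i.
Proof. by rewrite /mulGv -sumrB; apply: eq_bigr => j _; rewrite mulrBr. Qed.

Lemma mulGv_ge_term u i j : (forall k, 0 <= u k) -> G i j * u j <= mulGv u i.
Proof. by move=> u0; apply: (ler_sum_term (F := fun k => G i k * u k)) => k; rewrite mulr_ge0. Qed.

Definition cw_bound (t : R) :=
  exists w : I -> R, (forall i, 0 < w i) /\ (forall i, mulGv w i < t * w i).

Lemma cw_bound_gt u s t : (forall i, 0 < u i) -> (forall i, s * u i <= mulGv u i) ->
  cw_bound t -> s < t.
Proof.
move=> u0 su [w [w0 wt]].
have [i1 _ umax] := @arg_maxP _ _ _ ord0 predT (fun i => u i / w i) isT.
set c := u i1 / w i1.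
have uc i : u i <= c * w i by rewrite -ler_pdivrMr //; exact: umax.
have cw1 : c * w i1 = u i1 by rewrite /c divfK // gt_eqF.
have : s * u i1 < t * u i1.
  apply: le_lt_trans (su i1) _; apply: le_lt_trans (mulGv_le uc i1) _.
  by rewrite mulGvZ -cw1 mulrCA ltr_pM2l // divr_gt0.
by rewrite ltr_pM2r.
Qed.

Lemma cw_bound_le t t' : cw_bound t -> t <= t' -> cw_bound t'.
Proof.
move=> [w [w0 wt]] tt'; exists w; split => // i.
by apply: lt_le_trans (wt i) _; rewrite ler_wpM2r // ltW.
Qed.

Lemma cw_bound_open t : cw_bound t -> exists2 t', t' < t & cw_bound t'.
Proof.
move=> [w [w0 wt]].
have [i1 _ qmax] := @arg_maxP _ _ _ ord0 predT (fun i => mulGv w i / w i) isT.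
set m := mulGv w i1 / w i1.
have mt : m < t by rewrite /m ltr_pdivrMr.
have [mlt lt] := midf_lt mt.
exists ((m + t) / 2) => //; exists w; split => // i.
apply: le_lt_trans (_ : m * w i < _); last by rewrite ltr_pM2r.
by rewrite -ler_pdivrMr //; exact: qmax.
Qed.

Lemma cw_bound_gt0 t : cw_bound t -> 0 < t.
Proof.
move=> [w [w0 wt]].
have := le_lt_trans (mulGv_ge0 (fun i => ltW (w0 i)) ord0) (wt ord0).
by rewrite pmulr_lgt0.
Qed.

Lemma cw_bound_sum : cw_bound (1 + \sum_i \sum_j G i j).
Proof.
exists (fun _ => 1); split => // i; rewrite mulr1 /mulGv.
rewrite (@le_lt_trans _ _ (\sum_i \sum_j G i j)) ?ltrDr //.
under eq_bigr do rewrite mulr1.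
by apply: (ler_sum_term (F := fun i => \sum_j G i j)) => k; apply: sumr_ge0.
Qed.

Lemma has_inf_cw_bound : has_inf cw_bound.
Proof.
split; first by exists (1 + \sum_i \sum_j G i j); exact: cw_bound_sum.
by exists 0 => t /cw_bound_gt0 /ltW.
Qed.

Definition pf_root := inf cw_bound.

Lemma pf_root_le t : cw_bound t -> pf_root <= t.
Proof. by move=> Ht; apply: inf_lbound => //; case: has_inf_cw_bound. Qed.

Lemma cw_bound_gt_root t : pf_root < t -> cw_bound t.
Proof.
move=> rt; have tr : 0 < t - pf_root by rewrite subr_gt0.
have [e Se et] := inf_adherent tr has_inf_cw_bound.
by apply: cw_bound_le Se _; rewrite addrC subrK in et; apply: ltW.
Qed.

Lemma not_cw_bound_root : ~ cw_bound pf_root.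
Proof. by move=> /cw_bound_open [t' lt /pf_root_le]; rewrite leNgt lt. Qed.

Lemma super_le_root u s : (forall i, 0 < u i) -> (forall i, s * u i <= mulGv u i) ->
  s <= pf_root.
Proof.
move=> u0 su; rewrite leNgt; apply/negP => rs.
have [rlt lts] := midf_lt rs.
by have := cw_bound_gt u0 su (cw_bound_gt_root rlt); rewrite ltNge (ltW lts).
Qed.

Lemma super_lt_root u s : (forall i, 0 < u i) -> (forall i, s * u i < mulGv u i) ->
  s < pf_root.
Proof.
move=> u0 su.
have [i1 _ qmin] := @arg_minP _ _ _ ord0 predT (fun i => mulGv u i / u i) isT.
have sm : s < mulGv u i1 / u i1 by rewrite ltr_pdivlMr.
apply: lt_le_trans sm _; apply: (super_le_root u0) => i.
by rewrite -ler_pdivlMr //; exact: qmin.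
Qed.

Lemma cw_bound_minimum_principle t x : cw_bound t ->
  (forall i, 0 <= t * x i - mulGv x i) -> forall i, 0 <= x i.
Proof.
move=> [w [w0 wt]] hx.
have [i1 _ qmin] := @arg_minP _ _ _ ord0 predT (fun i => x i / w i) isT.
set c := x i1 / w i1.
have xc i : c * w i <= x i by rewrite -ler_pdivlMr //; exact: qmin.
have [c0|c0] := leP 0 c.
  by move=> i; apply: le_trans (xc i); rewrite mulr_ge0 // ltW.
pose y i := x i - c * w i.
have y0 i : 0 <= y i by rewrite subr_ge0.
have yi1 : y i1 = 0 by rewrite /y /c divfK ?subrr // gt_eqF.
have : 0 < t * y i1 - mulGv y i1.
  rewrite /y mulGvB mulGvZ mulrBr.
  have -> : t * x i1 - t * (c * w i1) - (mulGv x i1 - c * mulGv w i1) =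
            (t * x i1 - mulGv x i1) + (- c) * (t * w i1 - mulGv w i1) by ring.
  by apply: le_lt_trans (hx i1) _; rewrite ltrDl mulr_gt0 // ?oppr_gt0 // subr_gt0.
by rewrite yi1 mulr0 sub0r oppr_gt0 ltNge mulGv_ge0.
Qed.

Definition shift_mx (t : R) : 'M[R]_n.+1 := t%:M - G.

Lemma shift_mxE t m (B : 'M[R]_(n.+1, m)) i j :
  (shift_mx t *m B) i j = t * B i j - mulGv (fun k => B k j) i.
Proof. by rewrite /shift_mx mulmxBl mul_scalar_mx !mxE. Qed.

Lemma shift_mx_ker t : \det (shift_mx t) = 0 ->
  exists2 x : 'cV[R]_n.+1, x != 0 & shift_mx t *m x = 0.
Proof.
rewrite -det_tr => /eqP /det0P [v v0 vA]; exists v^T; first by rewrite trmx_eq0.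
by rewrite -[shift_mx t]trmxK -trmx_mul vA trmx0.
Qed.

Lemma cw_bound_shift_unit t : cw_bound t -> shift_mx t \in unitmx.
Proof.
move=> Ht; rewrite unitmxE unitfE; apply/eqP => /shift_mx_ker [x x0 Ax].
have xcoord (u : 'cV[R]_n.+1) k : shift_mx t *m u = 0 ->
    0 <= t * u k 0 - mulGv (fun l => u l 0) k.
  by move=> Au; rewrite -shift_mxE Au mxE.
have x_ge0 := cw_bound_minimum_principle Ht (xcoord x ^~ Ax).
have Nx_ge0 i : 0 <= - x i 0.
  have NAx : shift_mx t *m - x = 0 by rewrite mulmxN Ax oppr0.
  by have := cw_bound_minimum_principle Ht (xcoord _ ^~ NAx) i; rewrite mxE.
move/negP: x0; apply; apply/eqP/matrixP => i j; rewrite (ord1 j) mxE.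
by apply/eqP; rewrite eq_le x_ge0 andbT -oppr_ge0.
Qed.

Lemma cw_bound_shift_inv_ge0 t : cw_bound t -> forall i j, 0 <= invmx (shift_mx t) i j.
Proof.
move=> Ht i j; have U := cw_bound_shift_unit Ht.
apply: (cw_bound_minimum_principle (x := fun k => invmx (shift_mx t) k j) Ht) => k.
by rewrite -shift_mxE mulmxV // mxE ler0n.
Qed.

Lemma horner_char_poly_mx t : map_mx (horner_eval t) (char_poly_mx G) = shift_mx t.
Proof.
apply/matrixP => i j; rewrite /char_poly_mx /shift_mx !mxE.
by rewrite /horner_eval hornerD hornerN hornerMn hornerX hornerC.
Qed.

Lemma shift_mx_detE t : \det (shift_mx t) = (char_poly G).[t].
Proof. by rewrite -horner_char_poly_mx det_map_mx. Qed.

Lemma shift_mx_adjE t i j : \adj (shift_mx t) i j = (\adj (char_poly_mx G) i j).[t].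
Proof. by rewrite -horner_char_poly_mx -map_mx_adj mxE. Qed.

(* A polynomial in [t] equal to [det (t - G)^2 * (t - G)^-1] where [t - G] is
   invertible: nonnegative beyond the Perron root, hence at it by continuity. *)
Definition adj_det_poly i j := \adj (char_poly_mx G) i j * char_poly G.

Lemma adj_det_polyE t i j : shift_mx t \in unitmx ->
  (adj_det_poly i j).[t] = \det (shift_mx t) ^+ 2 * invmx (shift_mx t) i j.
Proof.
move=> U; rewrite /adj_det_poly hornerM -shift_mx_adjE -shift_mx_detE.
by rewrite adj_unitmx // mxE mulrC mulrA -expr2.
Qed.

Lemma adj_det_poly_gt_root_ge0 t i j : pf_root < t -> 0 <= (adj_det_poly i j).[t].
Proof.
move=> /cw_bound_gt_root Ht; rewrite adj_det_polyE ?cw_bound_shift_unit //.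
by rewrite mulr_ge0 ?sqr_ge0 ?cw_bound_shift_inv_ge0.
Qed.

Lemma adj_det_poly_root_ge0 i j : 0 <= (adj_det_poly i j).[pf_root].
Proof.
rewrite leNgt; apply/negP => neg.
have e0 : 0 < - (adj_det_poly i j).[pf_root] by rewrite oppr_gt0.
have [d d0 Hd] := poly_cont pf_root (adj_det_poly i j) e0.
have hy : `|(pf_root + d / 2) - pf_root| < d.
  by rewrite addrC addKr ger0_norm ?divr_ge0 ?ltW // ltr_pdivrMr // ltr_pMr // ltr1n.
have := Hd _ hy; have := @adj_det_poly_gt_root_ge0 (pf_root + d / 2) i j.
rewrite ltrDl divr_gt0 // => /(_ isT) h.
rewrite ltr_norml => /andP [_]; rewrite ltrBlDr addNr => h2.
by have := lt_le_trans h2 h; rewrite ltxx.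
Qed.

(* Otherwise [(r - G)^-1 1] would be a positive vector witnessing [cw_bound r]. *)
Lemma char_poly_pf_root : (char_poly G).[pf_root] = 0.
Proof.
apply/eqP/negPn/negP => dr.
have U : shift_mx pf_root \in unitmx by rewrite unitmxE unitfE shift_mx_detE.
have inv_ge0 i j : 0 <= invmx (shift_mx pf_root) i j.
  have := adj_det_poly_root_ge0 i j.
  by rewrite adj_det_polyE // pmulr_rge0 // exprn_even_gt0 //= shift_mx_detE.
set x := invmx (shift_mx pf_root) *m const_mx 1 : 'cV[R]_n.+1.
have x_ge0 i : 0 <= x i 0 by rewrite mxE; apply: sumr_ge0 => k _; rewrite mxE mulr1.
have Ax i : pf_root * x i 0 - mulGv (fun k => x k 0) i = 1.
  by rewrite -shift_mxE mulmxA mulmxV // mul1mx mxE.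
have x_gt0 i : 0 < x i 0.
  rewrite lt_def x_ge0 andbT; apply/eqP => xi0.
  have Gx : mulGv (fun k => x k 0) i = -1 by rewrite -(Ax i) xi0 mulr0 sub0r opprK.
  by have := mulGv_ge0 x_ge0 i; rewrite Gx ler0N1.
by apply: not_cw_bound_root; exists (fun i => x i 0); split => // i; rewrite -subr_gt0 Ax.
Qed.

Lemma pf_root_eigenvector :
  exists2 x : I -> R, (exists i, x i != 0) & forall i, mulGv x i = pf_root * x i.
Proof.
have [|x x0 Ax] := shift_mx_ker (t := pf_root); first by rewrite shift_mx_detE char_poly_pf_root.
exists (fun i => x i 0).
  by have [i [k xik]] := mx_neq0_entry x0; exists i; rewrite -(ord1 k).
move=> i; have := shift_mxE pf_root x i 0; rewrite Ax mxE => /eqP.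
by rewrite eq_sym subr_eq0 => /eqP.
Qed.

Lemma iter_mulGv_ge0 l v : (forall i, 0 <= v i) -> forall i, 0 <= iter l mulGv v i.
Proof. by move=> v0; elim: l => [|l IH] //= i; apply: mulGv_ge0. Qed.

Lemma iter_mulGvB l u w s :
  iter l mulGv (fun i => u i - s * w i) = fun i => iter l mulGv u i - s * iter l mulGv w i.
Proof.
elim: l => [|l IH] //=; apply/funext => i; rewrite IH.
by rewrite (mulGvB _ (fun i => s * iter l mulGv w i)) mulGvZ.
Qed.

Lemma iter_mulGv_eigen l v s : (forall i, mulGv v i = s * v i) ->
  forall i, iter l mulGv v i = s ^+ l * v i.
Proof.
move=> Gv; elim: l => [|l IH] i /=; first by rewrite mul1r.
rewrite (_ : iter l mulGv v = fun k => s ^+ l * v k); last exact/funext.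
by rewrite mulGvZ Gv mulrCA mulrA exprS.
Qed.

Definition pow_sum (K : nat) (v : I -> R) (i : I) := \sum_(l < K) iter l.+1 mulGv v i.

Lemma mulGv_pow_sum K v i : mulGv (pow_sum K v) i = pow_sum K (mulGv v) i.
Proof.
rewrite /mulGv /pow_sum; under eq_bigr do rewrite mulr_sumr.
rewrite exchange_big /=; apply: eq_bigr => l _.
by rewrite -iterSr.
Qed.

Lemma pow_sumB K u w s i : pow_sum K (fun i => u i - s * w i) i = pow_sum K u i - s * pow_sum K w i.
Proof. by rewrite /pow_sum mulr_sumr -sumrB; apply: eq_bigr => l _; rewrite iter_mulGvB. Qed.

Hypothesis G_irr : forall i j, reach (fun a b => 0 < G a b) i j.

Lemma reach_iter_mulGv_gt0 v a b : (forall i, 0 <= v i) ->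
  reach (fun a b => 0 < G a b) a b -> 0 < v b -> exists l, 0 < iter l.+1 mulGv v a.
Proof.
move=> v0; elim=> [a' b' Gab | a' b' c' Gab _ IH] vb.
  by exists 0%N; apply: lt_le_trans (mulGv_ge_term a' b' v0); rewrite mulr_gt0.
have [l Hl] := IH vb; exists l.+1.
by apply: lt_le_trans (mulGv_ge_term a' b' (iter_mulGv_ge0 l.+1 v0)); rewrite mulr_gt0.
Qed.

Lemma pow_sum_gt0 v j : (forall i, 0 <= v i) -> 0 < v j ->
  exists K0, forall K, (K0 <= K)%N -> forall i, 0 < pow_sum K v i.
Proof.
move=> v0 vj.
have /choice [f Hf] i : exists l, 0 < iter l.+1 mulGv v i.
  exact: reach_iter_mulGv_gt0 v0 (G_irr i j) vj.
exists (\max_i f i).+1 => K HK i.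
have fK : (f i < K)%N by apply: leq_trans HK; rewrite ltnS (leq_bigmax i).
apply: lt_le_trans (Hf i) _.
apply: (ler_sum_term (F := fun l : 'I_K => iter l.+1 mulGv v i) (Ordinal fK)) => l.
exact: iter_mulGv_ge0.
Qed.

(* A strict inequality somewhere would spread, through [pow_sum], to a positive
   vector [u] with [s u < G u]. *)
Lemma super_eigenvector_eq v j s : (forall i, 0 <= v i) -> 0 < v j ->
  (forall i, s * v i <= mulGv v i) -> pf_root <= s -> forall i, mulGv v i = s * v i.
Proof.
move=> v0 vj sv rs.
have [Kv Hv] := pow_sum_gt0 v0 vj.
case: (boolP [exists i, s * v i < mulGv v i]) => [/existsP [i1 svi1]|]; last first.
  rewrite negb_exists => /forallP sv' i.
  by apply/eqP; rewrite eq_le sv andbT leNgt sv'.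
pose z i := mulGv v i - s * v i.
have z_ge0 i : 0 <= z i by rewrite subr_ge0.
have zi1 : 0 < z i1 by rewrite subr_gt0.
have [Kz Hz] := pow_sum_gt0 z_ge0 zi1.
pose K := maxn Kv Kz.
have : s < pf_root.
  apply: (super_lt_root (u := pow_sum K v)) => [i|i]; first exact/Hv/leq_maxl.
  by rewrite -subr_gt0 mulGv_pow_sum -pow_sumB; apply/Hz/leq_maxr.
by rewrite ltNge rs.
Qed.

Lemma eigenvector_gt0 v j s : (forall i, 0 <= v i) -> 0 < v j ->
  (forall i, mulGv v i = s * v i) -> forall i, 0 < v i.
Proof.
move=> v0 vj Gv i; rewrite lt_def v0 andbT; apply/eqP => vi0.
have [K HK] := pow_sum_gt0 v0 vj.
have := HK K (leqnn K) i; rewrite /pow_sum.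
under eq_bigr do rewrite (iter_mulGv_eigen _ Gv) vi0 mulr0.
by rewrite big1 // ltxx.
Qed.

Lemma pf_root_positive_eigenvector : 0 <= pf_root /\
  exists v : I -> R, (forall i, 0 < v i) /\ forall i, mulGv v i = pf_root * v i.
Proof.
have [x [j xj] Gx] := pf_root_eigenvector.
pose v i := `|x i|.
have v0 i : 0 <= v i by apply: normr_ge0.
have vj : 0 < v j by rewrite normr_gt0.
have Gv_ge i : `|pf_root| * v i <= mulGv v i.
  rewrite /v -normrM -Gx /mulGv; apply: le_trans (ler_norm_sum _ _ _) _.
  by apply: ler_sum => k _; rewrite normrM ger0_norm.
have Gv := super_eigenvector_eq v0 vj Gv_ge (ler_norm _).
have v_gt0 := eigenvector_gt0 v0 vj Gv.
have r_ge0 : 0 <= pf_root.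
  by apply: le_trans (normr_ge0 pf_root) (super_le_root v_gt0 _) => i; rewrite Gv.
by split=> //; exists v; split=> // i; rewrite Gv ger0_norm.
Qed.

End PerronFrobeniusReal.

Theorem perron_frobenius (R : realType) n (G : 'M[R]_n.+1) :
  (forall i j, 0 <= G i j) -> (forall i j, reach (fun a b => 0 < G a b) i j) ->
  exists r (v w : 'I_n.+1 -> R), [/\ 0 <= r, (forall i, 0 < v i), (forall i, 0 < w i),
     (forall i, \sum_j G i j * v j = r * v i) & (forall j, \sum_i w i * G i j = r * w j)].
Proof.
move=> G0 Girr.
have [r0 [v [v0 Gv]]] := pf_root_positive_eigenvector G0 Girr.
have GT0 i j : 0 <= G^T i j by rewrite mxE.
have [_ [w [w0 wG]]] := pf_root_positive_eigenvector GT0 (fun i j => reach_trmx (Girr j i)).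
have {}wG j : \sum_i w i * G i j = pf_root G^T * w j.
  by rewrite -wG /mulGv; apply: eq_bigr => i _; rewrite mxE mulrC.
have wv_gt0 : 0 < \sum_i w i * v i.
  apply: lt_le_trans (mulr_gt0 (w0 ord0) (v0 ord0)) _.
  by apply: (ler_sum_term (F := fun i => w i * v i)) => i; rewrite mulr_ge0 // ltW.
(* Both roots equal [w G v / w v]. *)
have rGT : pf_root G = pf_root G^T.
  apply: (mulIf (lt0r_neq0 wv_gt0)); transitivity (\sum_i w i * \sum_j G i j * v j).
    by rewrite mulr_sumr; apply: eq_bigr => i _; rewrite -/(mulGv G v i) Gv mulrCA.
  under eq_bigr do rewrite mulr_sumr.
  rewrite exchange_big /= mulr_sumr; apply: eq_bigr => j _.
  by rewrite [RHS]mulrA -wG mulr_suml; apply: eq_bigr => i _; rewrite mulrA.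
by exists (pf_root G), v, w; split=> // j; rewrite wG rGT.
Qed.

Local Open Scope complex_scope.

Lemma norm_real_complex (R : rcfType) (a : R) : 0 <= a -> `|a%:C| = a%:C.
Proof. by move=> a0; rewrite ger0_norm // ler0c. Qed.

Lemma is_delta_uniq (R : realType) n (X Y : 'M[R[i]]_n) d1 d2 :
  (forall e, eigenvalue X e = eigenvalue Y e) -> is_delta X d1 -> is_delta Y d2 -> d1 = d2.
Proof.
move=> XY [e1 [b1 [i1 m1]]] [e2 [b2 [i2 m2]]].
have e1' : eigenvalue Y d1 by rewrite -XY.
have e2' : eigenvalue X d2 by rewrite XY.
have n12 : `|d1| = `|d2| by apply/le_anti; rewrite b2 // b1.
have re12 : complex.Re d1 = complex.Re d2 by apply/le_anti; rewrite m2 // m1.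
have im12 : complex.Im d1 = complex.Im d2.
  have := add_Re2_Im2 d1; rewrite n12 -add_Re2_Im2 re12 => /complexI /addrI /eqP.
  by rewrite eqrXn2 // => /eqP.
by apply/eqP; rewrite eq_complex re12 im12 !eqxx.
Qed.

Lemma scale_inv_mx11 (F : fieldType) (x : 'M[F]_1) : x 0 0 != 0 -> (x 0 0)^-1 *: x = 1%:M.
Proof. by move=> x0; rewrite {2}[x]mx11_scalar scale_scalar_mx mulVf. Qed.

Lemma scale_mx11_eq1 (F : ringType) c (x : 'M[F]_1) : c *: x = 1%:M -> c * x 0 0 = 1.
Proof. by move=> /matrixP /(_ 0 0); rewrite !mxE eqxx mulr1n. Qed.

Lemma left_eigen_similar (F : comUnitRingType) n (X D : 'M[F]_n) e (x : 'rV[F]_n) :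
  D \in unitmx -> x *m (D *m X *m invmx D) = e *: x -> x *m D *m X = e *: (x *m D).
Proof.
move=> Du xX; have -> : x *m D *m X = x *m (D *m X *m invmx D) *m D.
  by rewrite !mulmxA mulmxKV.
by rewrite xX scalemxAl.
Qed.

Lemma right_eigen_similar (F : comUnitRingType) n (X D : 'M[F]_n) e (x : 'cV[F]_n) :
  D \in unitmx -> (D *m X *m invmx D) *m x = e *: x ->
  X *m (invmx D *m x) = e *: (invmx D *m x).
Proof.
move=> Du Xx; have -> : X *m (invmx D *m x) = invmx D *m ((D *m X *m invmx D) *m x).
  by rewrite !mulmxA mulVmx // mul1mx.
by rewrite Xx scalemxAr.
Qed.

Lemma eigenvalue_similar (F : fieldType) n (X D : 'M[F]_n) e : D \in unitmx ->
  eigenvalue (D *m X *m invmx D) e = eigenvalue X e.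
Proof.
move=> Du; apply/eigenvalueP/eigenvalueP => [[x xX x0]|[x xX x0]].
  exists (x *m D); first exact: left_eigen_similar.
  by apply: contra x0 => /eqP xD; rewrite -[x]mulmx1 -(mulmxV Du) mulmxA xD mul0mx.
exists (x *m invmx D); first by rewrite !mulmxA mulmxKV // xX scalemxAl.
by apply: contra x0 => /eqP xD; rewrite -[x]mulmx1 -(mulVmx Du) mulmxA xD mul0mx.
Qed.

Definition complex_mx (R : rcfType) m n (G : 'M[R]_(m, n)) : 'M[R[i]]_(m, n) :=
  map_mx (real_complex R) G.

Definition complex_row (R : rcfType) n (w : 'I_n -> R) : 'rV[R[i]]_n := \row_j (w j)%:C.

Lemma complex_mx_tr (R : rcfType) m n (G : 'M[R]_(m, n)) :
  (complex_mx G)^T = complex_mx G^T.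
Proof. exact: map_trmx. Qed.

Lemma complex_row_dot_neq0 (R : rcfType) n (a b : 'I_n.+1 -> R) :
  (forall i, 0 < a i) -> (forall i, 0 < b i) ->
  (complex_row a *m (complex_row b)^T) 0 0 != 0.
Proof.
move=> a0 b0; rewrite mxE; apply: lt0r_neq0.
apply: lt_le_trans (_ : 0 < (a ord0 * b ord0)%:C) _; first by rewrite ltcR mulr_gt0.
apply: le_trans (ler_sum_term (F := fun j => complex_row a 0 j * (complex_row b)^T j 0) ord0 _).
  by rewrite !mxE rmorphM.
by move=> j; rewrite !mxE -rmorphM ler0c mulr_ge0 // ltW.
Qed.

Lemma complex_row_eigen (R : rcfType) n (G : 'M[R]_n) r (w : 'I_n -> R) :
  (forall j, \sum_i w i * G i j = r * w j) ->
  complex_row w *m complex_mx G = r%:C *: complex_row w.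
Proof.
move=> wG; apply/matrixP => i j; rewrite !mxE -rmorphM -wG rmorph_sum.
by apply: eq_bigr => k _; rewrite !mxE rmorphM.
Qed.

Lemma complex_col_eigen (R : rcfType) n (G : 'M[R]_n) r (v : 'I_n -> R) :
  (forall i, \sum_j G i j * v j = r * v i) ->
  complex_mx G *m (complex_row v)^T = r%:C *: (complex_row v)^T.
Proof.
move=> Gv; apply/matrixP => i j; rewrite !mxE -rmorphM -Gv rmorph_sum.
by apply: eq_bigr => k _; rewrite !mxE rmorphM.
Qed.

Lemma complex_row_neq0 (R : rcfType) n (w : 'I_n.+1 -> R) :
  (forall i, 0 < w i) -> complex_row w != 0.
Proof.
move=> w_gt0; apply/negP => /eqP /matrixP /(_ 0 ord0); rewrite !mxE => /complexI /eqP.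
by rewrite gt_eqF.
Qed.

Lemma onesCE (R : realType) n : onesC R n = (complex_row (fun _ => 1 : R))^T.
Proof. by apply/matrixP => i j; rewrite !mxE. Qed.

Section PerronFrobeniusComplex.
Variables (R : realType) (n : nat) (G : 'M[R]_n.+1) (r : R) (v w : 'I_n.+1 -> R).
Hypothesis G_ge0 : forall i j, 0 <= G i j.
Hypothesis G_irr : forall i j, reach (fun a b => 0 < G a b) i j.
Hypothesis r_ge0 : 0 <= r.
Hypothesis v_gt0 : forall i, 0 < v i.
Hypothesis w_gt0 : forall i, 0 < w i.
Hypothesis Gv : forall i, \sum_j G i j * v j = r * v i.
Hypothesis wG : forall j, \sum_i w i * G i j = r * w j.
Local Notation C := R[i].
Local Notation X := (complex_mx G).

Lemma norm_left_eigenvector_le e (x : 'rV[C]_n.+1) : x *m X = e *: x ->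
  forall j, `|e| * `|x 0 j| <= \sum_i `|x 0 i| * (G i j)%:C.
Proof.
move=> /matrixP xX j; have := xX 0 j; rewrite !mxE => exj.
rewrite -normrM -exj; apply: le_trans (ler_norm_sum _ _ _) _.
by apply: ler_sum => i _; rewrite mxE normrM norm_real_complex.
Qed.

Lemma sum_left_mul_v (a : 'I_n.+1 -> C) :
  \sum_j (\sum_i a i * (G i j)%:C) * (v j)%:C = r%:C * \sum_i a i * (v i)%:C.
Proof.
under eq_bigr do rewrite mulr_suml.
rewrite exchange_big mulr_sumr; apply: eq_bigr => i _ /=.
rewrite mulrCA -rmorphM -Gv rmorph_sum mulr_sumr; apply: eq_bigr => j _.
by rewrite rmorphM mulrA.
Qed.

Lemma eigenvalue_norm_le e : eigenvalue X e -> `|e| <= r%:C.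
Proof.
move=> /eigenvalueP [x xX /mx_neq0_entry [i [j]]]; rewrite (ord1 i) => xj.
pose a k := `|x 0 k|.
have av_ge0 k : 0 <= a k * (v k)%:C by rewrite mulr_ge0 ?normr_ge0 // ler0c ltW.
have T_gt0 : 0 < \sum_k a k * (v k)%:C.
  apply: lt_le_trans (_ : 0 < a j * (v j)%:C) (ler_sum_term _ av_ge0).
  by rewrite mulr_gt0 ?normr_gt0 // ltcR.
rewrite -(ler_pM2r T_gt0) -sum_left_mul_v mulr_sumr; apply: ler_sum => k _.
rewrite mulrA; apply: ler_wpM2r; first by rewrite ler0c ltW.
exact: norm_left_eigenvector_le xX k.
Qed.

Lemma is_delta_pf_root : is_delta X r%:C.
Proof.
split; first by apply/eigenvalueP; exists (complex_row w);
  [exact: complex_row_eigen | exact: complex_row_neq0].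
split; first by move=> e /eigenvalue_norm_le; rewrite norm_real_complex.
split=> //= e /eigenvalue_norm_le eb _ _.
have := le_trans (normc_ge_Re e) eb; rewrite lecR.
exact/le_trans/ler_norm.
Qed.

Lemma is_delta_pf_rootE d : is_delta X d -> d = r%:C.
Proof. by move=> Xd; apply: is_delta_uniq Xd is_delta_pf_root. Qed.

(* Weighting by the positive right eigenvector [v] turns [r a <= a G] into an equality. *)
Lemma super_left_eigen_eq (a : 'I_n.+1 -> C) : (forall j, 0 <= a j) ->
  (forall j, r%:C * a j <= \sum_i a i * (G i j)%:C) ->
  forall j, \sum_i a i * (G i j)%:C = r%:C * a j.
Proof.
move=> a_ge0 ra.
pose gap j := (\sum_i a i * (G i j)%:C - r%:C * a j) * (v j)%:C.
have gap_ge0 j : 0 <= gap j by rewrite mulr_ge0 ?subr_ge0 ?ra // ler0c ltW.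
have gap_sum : \sum_j gap j = 0.
  rewrite /gap; under eq_bigr do rewrite mulrBl.
  apply/eqP; rewrite sumrB sum_left_mul_v mulr_sumr subr_eq0.
  by apply/eqP/eq_bigr => j _; rewrite mulrA.
move=> j; have /eqP := psumr_eq0P (fun j _ => gap_ge0 j) gap_sum (i := j) isT.
by rewrite mulf_eq0 fmorph_eq0 (gt_eqF (v_gt0 j)) orbF subr_eq0 => /eqP.
Qed.

Lemma left_eigen_support (a : 'I_n.+1 -> C) : (forall j, 0 <= a j) ->
  (forall j, \sum_i a i * (G i j)%:C = r%:C * a j) ->
  forall k, 0 < a k -> forall l, 0 < a l.
Proof.
move=> a_ge0 aG.
have step k l : 0 < G k l -> 0 < a k -> 0 < a l.
  move=> Gkl ak; rewrite lt_def a_ge0 andbT; apply/eqP => al.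
  have : 0 < \sum_i a i * (G i l)%:C.
    apply: lt_le_trans (_ : 0 < a k * (G k l)%:C) _; first by rewrite mulr_gt0 // ltcR.
    by apply: (ler_sum_term (F := fun i => a i * (G i l)%:C)) => i; rewrite mulr_ge0 // ler0c.
  by rewrite aG al mulr0 ltxx.
move=> k ak l; move: ak; elim: (G_irr k l) => [k' l' Gkl | k' l' m' Gkl _ IH] ak.
  exact: step Gkl ak.
exact/IH/(step _ _ Gkl ak).
Qed.

Lemma left_eigenvector_line (x : 'rV[C]_n.+1) :
  x *m X = r%:C *: x -> exists c, x = c *: complex_row w.
Proof.
move=> xX; set c := x 0 ord0 / (w ord0)%:C; exists c.
have w0 : (w ord0)%:C != 0 by rewrite fmorph_eq0 gt_eqF.
pose y := x - c *: complex_row w.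
have yX : y *m X = r%:C *: y.
  by rewrite mulmxBl -scalemxAl xX (complex_row_eigen wG) scalerBr !scalerA mulrC.
have y0 : y 0 ord0 = 0 by rewrite !mxE /c divfK // subrr.
pose a j := `|y 0 j|.
have a_ge0 j : 0 <= a j by apply: normr_ge0.
have aG j : \sum_i a i * (G i j)%:C = r%:C * a j.
  apply: super_left_eigen_eq => // k.
  by rewrite -[r%:C]norm_real_complex //; apply: norm_left_eigenvector_le.
have a0 j : a j = 0.
  apply/eqP/negPn/negP => aj; have aj_gt0 : 0 < a j by rewrite lt_def aj a_ge0.
  by have := left_eigen_support a_ge0 aG aj_gt0 ord0; rewrite /a y0 normr0 ltxx.
apply/eqP; rewrite -subr_eq0 -/y; apply/eqP/matrixP => i j.
by rewrite (ord1 i) [RHS]mxE; apply/normr0_eq0/a0.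
Qed.

End PerronFrobeniusComplex.

Lemma right_eigenvector_line (R : realType) n (G : 'M[R]_n.+1) r (v w : 'I_n.+1 -> R) :
  (forall i j, 0 <= G i j) -> (forall i j, reach (fun a b => 0 < G a b) i j) ->
  0 <= r -> (forall i, 0 < v i) -> (forall i, 0 < w i) ->
  (forall i, \sum_j G i j * v j = r * v i) -> (forall j, \sum_i w i * G i j = r * w j) ->
  forall x : 'cV[R[i]]_n.+1, complex_mx G *m x = r%:C *: x ->
  exists c, x = c *: (complex_row v)^T.
Proof.
move=> G0 Girr r0 v0 w0 Gv wG x Xx.
have GT0 i j : 0 <= G^T i j by rewrite mxE.
have GTw i : \sum_j G^T i j * w j = r * w i.
  by rewrite -wG; apply: eq_bigr => j _; rewrite mxE mulrC.
have vGT j : \sum_i v i * G^T i j = r * v j.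
  by rewrite -Gv; apply: eq_bigr => i _; rewrite mxE mulrC.
have xX : x^T *m complex_mx G^T = r%:C *: x^T.
  by rewrite -complex_mx_tr -trmx_mul Xx linearZ.
have [c xc] := left_eigenvector_line GT0 (fun i j => reach_trmx (Girr j i)) r0 w0 v0 GTw vGT xX.
by exists c; apply: trmx_inj; rewrite linearZ /= trmxK.
Qed.

(** * Normalized Perron vectors of similar matrices *)

Definition left_pf_vector (R : realType) n (Y N : 'M[R[i]]_n) (mu : 'rV[R[i]]_n) :=
  exists d, is_delta Y d /\ mu *m Y = d *: mu /\ mu *m N *m onesC R n = 1%:M.

Definition right_pf_vector (R : realType) n (Y : 'M[R[i]]_n) (mu : 'rV[R[i]]_n)
    (v : 'cV[R[i]]_n) :=
  exists d, is_delta Y d /\ Y *m v = d *: v /\ mu *m v = 1%:M.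

Section NormalizedPerronVectors.
Variables (R : realType) (n : nat) (G : 'M[R]_n.+1) (r : R) (v w : 'I_n.+1 -> R).
Hypothesis G_ge0 : forall i j, 0 <= G i j.
Hypothesis G_irr : forall i j, reach (fun a b => 0 < G a b) i j.
Hypothesis r_ge0 : 0 <= r.
Hypothesis v_gt0 : forall i, 0 < v i.
Hypothesis w_gt0 : forall i, 0 < w i.
Hypothesis Gv : forall i, \sum_j G i j * v j = r * v i.
Hypothesis wG : forall j, \sum_i w i * G i j = r * w j.
Variable D : 'M[R[i]]_n.+1.
Hypothesis D_unit : D \in unitmx.
Local Notation X := (complex_mx G).
Local Notation W := (complex_row w).
Local Notation V := (complex_row v)^T.
Local Notation ones := (onesC R n.+1).

Let is_delta_X := is_delta_pf_root G_ge0 r_ge0 v_gt0 w_gt0 Gv wG.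
Let is_delta_XE := is_delta_pf_rootE G_ge0 r_ge0 v_gt0 w_gt0 Gv wG.
Let left_line := left_eigenvector_line G_ge0 G_irr r_ge0 v_gt0 w_gt0 Gv wG.
Let right_line := right_eigenvector_line G_ge0 G_irr r_ge0 v_gt0 w_gt0 Gv wG.

Lemma pf_row_ones_neq0 : (W *m ones) 0 0 != 0.
Proof. by rewrite onesCE complex_row_dot_neq0. Qed.

Lemma is_delta_similarE d : is_delta (D *m X *m invmx D) d -> d = r%:C.
Proof.
move=> Xd; apply: is_delta_uniq Xd is_delta_X => e.
exact: eigenvalue_similar.
Qed.

Lemma left_pf_vectorE mu : left_pf_vector X 1%:M mu -> mu = ((W *m ones) 0 0)^-1 *: W.
Proof.
move=> [d [/is_delta_XE -> [muX]]]; rewrite mulmx1.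
have [c ->] := left_line muX; rewrite -scalemxAl => /scale_mx11_eq1 cW1.
by congr (_ *: _); apply: (mulIf pf_row_ones_neq0); rewrite /= cW1 mulVf ?pf_row_ones_neq0.
Qed.

Lemma exists_left_pf_vector : exists mu, left_pf_vector X 1%:M mu.
Proof.
exists (((W *m ones) 0 0)^-1 *: W), r%:C.
split; first exact: is_delta_X.
split; first by rewrite -scalemxAl (complex_row_eigen wG) !scalerA mulrC.
by rewrite mulmx1 -scalemxAl scale_inv_mx11 ?pf_row_ones_neq0.
Qed.

Lemma left_pf_vector_col_neq0 mu : left_pf_vector X 1%:M mu -> (mu *m V) 0 0 != 0.
Proof.
move=> /left_pf_vectorE ->; rewrite -scalemxAl mxE mulf_neq0 ?invr_eq0 ?pf_row_ones_neq0 //.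
exact: complex_row_dot_neq0.
Qed.

Lemma right_pf_vectorE mu x : left_pf_vector X 1%:M mu -> right_pf_vector X mu x ->
  x = ((mu *m V) 0 0)^-1 *: V.
Proof.
move=> mu_pf [d [/is_delta_XE -> [Xx mux]]].
have [c xE] := right_line Xx; rewrite xE; congr (_ *: _).
have muV0 := left_pf_vector_col_neq0 mu_pf.
apply: (mulIf muV0); rewrite /= mulVf //.
by apply: scale_mx11_eq1; rewrite scalemxAr -xE.
Qed.

Lemma exists_right_pf_vector mu : left_pf_vector X 1%:M mu -> exists x, right_pf_vector X mu x.
Proof.
move=> mu_pf; exists (((mu *m V) 0 0)^-1 *: V), r%:C; split; first exact: is_delta_X.
split; first by rewrite -scalemxAr (complex_col_eigen Gv) !scalerA mulrC.
by rewrite -scalemxAr scale_inv_mx11 ?left_pf_vector_col_neq0.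
Qed.

Lemma left_pf_vector_similar mu mu' : left_pf_vector X 1%:M mu ->
  left_pf_vector (D *m X *m invmx D) D mu' -> mu' = mu *m invmx D.
Proof.
move=> /left_pf_vectorE -> [d [/is_delta_similarE -> [mu'X mu'1]]].
have mu'D_pf : left_pf_vector X 1%:M (mu' *m D).
  exists r%:C; split; first exact: is_delta_X.
  by split; [exact: left_eigen_similar | rewrite mulmx1].
by rewrite -(left_pf_vectorE mu'D_pf) mulmxK.
Qed.

Lemma right_pf_vector_similar mu x mu' x' :
  left_pf_vector X 1%:M mu -> right_pf_vector X mu x ->
  left_pf_vector (D *m X *m invmx D) D mu' -> right_pf_vector (D *m X *m invmx D) mu' x' ->
  x' = D *m x.
Proof.
move=> mu_pf x_pf mu'_pf [d [/is_delta_similarE -> [Xx' mu'x']]].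
have x'_pf : right_pf_vector X mu (invmx D *m x').
  exists r%:C; split; first exact: is_delta_X.
  split; first exact: right_eigen_similar.
  by rewrite mulmxA -(left_pf_vector_similar mu_pf mu'_pf).
by rewrite (right_pf_vectorE mu_pf x_pf) -(right_pf_vectorE mu_pf x'_pf) mulKVmx.
Qed.

Lemma perron_vectors_similar :
  [/\ forall d1 d2, is_delta X d1 -> is_delta (D *m X *m invmx D) d2 -> d2 = d1,
      exists mu, left_pf_vector X 1%:M mu,
      forall mu, left_pf_vector X 1%:M mu -> exists x, right_pf_vector X mu x,
      forall mu mu', left_pf_vector X 1%:M mu ->
        left_pf_vector (D *m X *m invmx D) D mu' -> mu' = mu *m invmx D &
      forall mu x mu' x', left_pf_vector X 1%:M mu -> right_pf_vector X mu x ->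
        left_pf_vector (D *m X *m invmx D) D mu' ->
        right_pf_vector (D *m X *m invmx D) mu' x' -> x' = D *m x].
Proof.
split; [|exact: exists_left_pf_vector|exact: exists_right_pf_vector|
  exact: left_pf_vector_similar|exact: right_pf_vector_similar].
by move=> d1 d2 /is_delta_XE -> /is_delta_similarE ->.
Qed.

End NormalizedPerronVectors.

(** * [Gamma_A^*] on the circle of radius [y] *)

Lemma expr_cos_sin (R : realType) (x : R) k :
  (cos x +i* sin x) ^+ k = cos (k%:R * x) +i* sin (k%:R * x).
Proof.
elim: k => [|k IH]; first by rewrite expr0 mul0r cos0 sin0.
rewrite exprSr IH -natr1 mulrDl mul1r cosD sinD.
by simpc; rewrite [sin _ * cos _ + _]addrC.
Qed.

Lemma omega_expr_tau (R : realType) tau : (0 < tau)%N -> omega R tau ^+ tau = 1.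
Proof.
move=> tau_gt0; rewrite /omega expr_cos_sin mulrCA divff ?pnatr_eq0 -?lt0n // mulr1.
by rewrite mulr_natl cos2pi sin2pi.
Qed.

Lemma norm_omega (R : realType) tau : `|omega R tau| = 1.
Proof. by rewrite normc_def /= cos2Dsin2 sqrtr1. Qed.

Section DeltaMatrix.
Variables (R : realType) (n : nat) (p : 'I_n -> nat).

Lemma DeltaM_mul_diag (w : R[i]) : w != 0 -> DeltaM p w *m diag_mx (\row_j w ^+ p j) = 1%:M.
Proof.
move=> w0; rewrite mulmx_diag -diag_const_mx; congr diag_mx.
by apply/matrixP => i j; rewrite !mxE mulVf // expf_neq0.
Qed.

Lemma DeltaM_unit (w : R[i]) : w != 0 -> DeltaM p w \in unitmx.
Proof. by move=> w0; have [] := mulmx1_unit (DeltaM_mul_diag w0). Qed.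

Lemma invmx_DeltaM (w : R[i]) : w != 0 -> invmx (DeltaM p w) = diag_mx (\row_j w ^+ p j).
Proof.
move=> w0; rewrite -[invmx _]mulmx1 -(DeltaM_mul_diag w0) mulmxA.
by rewrite mulVmx ?DeltaM_unit // mul1mx.
Qed.

Lemma DeltaM1 : DeltaM p (1 : R[i]) = 1%:M.
Proof.
rewrite /DeltaM -diag_const_mx; congr diag_mx.
by apply/matrixP => i j; rewrite !mxE expr1n invr1.
Qed.

End DeltaMatrix.

Lemma Gamma_k_pred (R : realType) n (A : nat -> 'M[R]_n) k : Gamma_k A (k%:Z - 1) = A k.
Proof.
case: k => [|k] //.
by rewrite (_ : k.+1%:Z - 1 = k%:Z) // -addn1 PoszD addrK.
Qed.

Lemma period_twist (R : realType) n (A : nat -> 'M[R]_n) tau (p : 'I_n -> nat)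
    (F : comNzRingType) (w : F) :
  w ^+ tau = 1 ->
  (forall (k : int) i j, 0 < Gamma_k A k i j -> (k == (p j)%:Z - (p i)%:Z %[mod tau%:Z])%Z) ->
  forall k i j, 0 < A k i j -> w ^+ k * w ^+ p i = w * w ^+ p j.
Proof.
move=> w_tau compat k i j Akij.
have := compat (k%:Z - 1) i j; rewrite Gamma_k_pred => /(_ Akij).
rewrite eqz_mod_dvd.
rewrite (_ : k%:Z - 1 - ((p j)%:Z - (p i)%:Z) = (k + p i)%N%:Z - (1 + p j)%N%:Z); last first.
  by rewrite !PoszD; ring.
rewrite -eqz_mod_dvd !modz_nat => /eqP [kp].
by rewrite -exprD -(expr_mod _ w_tau) kp (expr_mod _ w_tau) exprD expr1.
Qed.

Lemma lt_conv_radius (R : realType) n (A : nat -> 'M[R]_n) (y : R) :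
  (y%:E < conv_radius A)%E ->
  exists2 r', y < r' & forall i j, cvgn (series (fun k => r' ^+ k * A k i j)).
Proof. by move=> /ereal_sup_gt [_ [r' [_ cvgA] <-]]; rewrite lte_fin => yr'; exists r'. Qed.

Lemma series_zero (V : zmodType) : series (fun=> 0 : V) = fun=> 0.
Proof. by apply/funext => m; rewrite /series /= big1. Qed.

Lemma limn_series_mull (R : realType) (c : R) (f : R^nat) : cvgn (series f) ->
  limn (series (fun k => c * f k)) = c * limn (series f).
Proof.
by move=> cf; rewrite (_ : (fun k => c * f k) = c *: f) ?lim_seriesZ //; apply/funext.
Qed.

Lemma Re_realM (R : rcfType) (a : R) (q : R[i]) : complex.Re (a%:C * q) = a * complex.Re q.
Proof. by case: q => c d; simpc. Qed.

Lemma Im_realM (R : rcfType) (a : R) (q : R[i]) : complex.Im (a%:C * q) = a * complex.Im q.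
Proof. by case: q => c d; simpc. Qed.

Lemma complex_mulr_real (R : rcfType) (a : R) (q : R[i]) :
  (complex.Re q * a) +i* (complex.Im q * a) = q * a%:C.
Proof. by case: q => c d; simpc. Qed.

Section GammaAtPositiveReal.
Variables (R : realType) (n : nat) (A : nat -> 'M[R]_n) (y r' : R).
Hypothesis A_ge0 : forall k i j, 0 <= A k i j.
Hypothesis y_gt0 : 0 < y.
Hypothesis y_lt : y < r'.
Hypothesis cvg_r' : forall i j, cvgn (series (fun k => r' ^+ k * A k i j)).

Lemma cvg_series_y i j : cvgn (series (fun k => A k i j * y ^+ k)).
Proof.
apply: (@series_le_cvg _ _ (fun k => r' ^+ k * A k i j)); last exact: cvg_r'.
- by move=> k; rewrite mulr_ge0 // exprn_ge0 // ltW.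
- by move=> k; rewrite mulr_ge0 // exprn_ge0 // ltW // (lt_trans y_gt0 y_lt).
- move=> k; rewrite mulrC ler_wpM2r //; apply: lerXn2r; rewrite ?nnegrE ?ltW //.
  exact: lt_trans y_gt0 y_lt.
Qed.

Definition Ay i j := limn (series (fun k => A k i j * y ^+ k)).

Lemma Ay_ge_term k i j : A k i j * y ^+ k <= Ay i j.
Proof.
have term_ge0 l : 0 <= A l i j * y ^+ l by rewrite mulr_ge0 // exprn_ge0 // ltW.
have incr : nondecreasing_seq (series (fun k => A k i j * y ^+ k)).
  by apply: nondecreasing_series => l _ _.
apply: le_trans (nondecreasing_cvgn_le incr (@cvg_series_y i j) k.+1).
by rewrite /series /= big_nat_recr //= lerDr sumr_ge0.
Qed.

Definition Gamma_y : 'M[R]_n := \matrix_(i, j) (y^-1 * Ay i j).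

Lemma Gamma_y_ge0 i j : 0 <= Gamma_y i j.
Proof.
rewrite mxE; apply: mulr_ge0; first by rewrite invr_ge0 ltW.
by apply: le_trans (@Ay_ge_term 0 i j); rewrite expr0 mulr1.
Qed.

Lemma Gamma_y_gt0 i j : 0 < Asum A i j -> 0 < Gamma_y i j.
Proof.
move=> Asum_gt0; rewrite mxE mulr_gt0 ?invr_gt0 //.
case: (pselect (exists k, 0 < A k i j)) => [[k Ak]|nA].
  by apply: lt_le_trans (@Ay_ge_term k i j); rewrite mulr_gt0 // exprn_gt0.
have A0 : (fun k => A k i j) = (fun=> 0).
  apply/funext => k; apply/eqP; rewrite eq_le A_ge0 andbT leNgt.
  by apply/negP => Ak; apply: nA; exists k.
by move: Asum_gt0; rewrite /Asum mxE A0 series_zero lim_cst ?ltxx.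
Qed.

Lemma GammaStar_real : GammaStar A y%:C = complex_mx Gamma_y.
Proof.
apply/matrixP => i j; rewrite !mxE.
have eRe : (fun k => A k i j * complex.Re (y%:C ^+ k)) = (fun k => A k i j * y ^+ k).
  by apply/funext => k; rewrite -rmorphXn.
have eIm : (fun k => A k i j * complex.Im (y%:C ^+ k)) = (fun=> 0).
  by apply/funext => k; rewrite -rmorphXn /= mulr0.
rewrite eRe eIm series_zero lim_cst; last exact: Rhausdorff.
by rewrite complexr0 rmorphM fmorphV.
Qed.

Variables (p : 'I_n -> nat) (w : R[i]).
Hypothesis w_neq0 : w != 0.
Hypothesis twist : forall k i j, 0 < A k i j -> w ^+ k * w ^+ p i = w * w ^+ p j.

(* On the support of [A k i j], [w ^+ k = w * w ^+ p j / w ^+ p i]: the [(i, j)]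
   entry of [A^*(y w) / (y w)] is the one of [A^*(y) / y] times [w ^+ p j / w ^+ p i]. *)
Lemma GammaStar_twist :
  GammaStar A (y%:C * w) = DeltaM p w *m GammaStar A y%:C *m invmx (DeltaM p w).
Proof.
rewrite GammaStar_real invmx_DeltaM //; apply/matrixP => i j.
rewrite mul_mx_diag mul_diag_mx !mxE.
set q := w * (w ^+ p j / w ^+ p i).
have wp_neq0 : w ^+ p i != 0 by rewrite expf_neq0.
have term k : (A k i j)%:C * (y%:C * w) ^+ k = (A k i j * y ^+ k)%:C * q.
  have [->|Ak] := eqVneq (A k i j) 0; first by rewrite !mul0r.
  have Apos : 0 < A k i j by rewrite lt_def Ak A_ge0.
  rewrite exprMn rmorphM rmorphXn -mulrA; congr (_ * (_ * _)).
  by rewrite /q mulrA -(twist Apos) mulfK.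
have eRe : (fun k => A k i j * complex.Re ((y%:C * w) ^+ k)) =
    (fun k => complex.Re q * (A k i j * y ^+ k)).
  by apply/funext => k; rewrite -Re_realM term Re_realM mulrC.
have eIm : (fun k => A k i j * complex.Im ((y%:C * w) ^+ k)) =
    (fun k => complex.Im q * (A k i j * y ^+ k)).
  by apply/funext => k; rewrite -Im_realM term Im_realM mulrC.
rewrite eRe eIm !limn_series_mull -?/(Ay i j); try exact: cvg_series_y.
rewrite complex_mulr_real rmorphM fmorphV /q.
by field; rewrite fmorph_eq0 (gt_eqF y_gt0) wp_neq0 w_neq0.
Qed.

End GammaAtPositiveReal.

Local Open Scope classical_set_scope.

Theorem proposition2p10 (R : realType) (M0 M : nat)
  (B0 : 'M[R]_(M0, M0)) (Bs : nat -> 'M[R]_(M0, M)) (C0 : 'M[R]_(M, M0))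
  (A : nat -> 'M[R]_M) (tau : nat) (p : 'I_M -> nat) :
  (0 < M0)%N -> (0 < M)%N ->
  (forall i j, 0 <= B0 i j) -> (forall n i j, 0 <= Bs n i j) ->
  (forall i j, 0 <= C0 i j) -> (forall k i j, 0 <= A k i j) ->
  (forall i j, cvgn (series (fun k => A k i j))) ->
  (forall i, \sum_j Asum A i j = 1) ->
  (forall i, series (fun n => \sum_j Bs n i j) @ \oo --> 1 - \sum_j B0 i j) ->
  (forall i, series (fun n => \sum_j A n.+1 i j) @ \oo --> 1 - \sum_j C0 i j) ->
  irreducible_mx (mg1_T B0 Bs C0 A) ->
  irreducible_mx (fun i j : 'I_M => Asum A i j) ->
  is_period A tau ->
  (forall i, (p i < tau)%N) ->
  (forall (k : int) i j, 0 < Gamma_k A k i j ->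
     (k == (p j)%:Z - (p i)%:Z %[mod tau%:Z])%Z) ->
  forall (y : R) (nu : nat), 0 < y -> (y%:E < conv_radius A)%E -> (nu < tau)%N ->
  let z := (y%:C * omega R tau ^+ nu) in
  (forall d1 d2, is_delta (GammaStar A y%:C) d1 -> is_delta (GammaStar A z) d2 ->
     d2 = d1) /\
  (exists mu, is_mu A p y%:C mu) /\
  (forall mu, is_mu A p y%:C mu -> exists v, is_v A y%:C mu v) /\
  (forall mu mu', is_mu A p y%:C mu -> is_mu A p z mu' ->
     mu' = mu *m invmx (DeltaM p (omega R tau ^+ nu))) /\
  (forall mu v mu' v', is_mu A p y%:C mu -> is_v A y%:C mu v ->
     is_mu A p z mu' -> is_v A z mu' v' ->
     v' = DeltaM p (omega R tau ^+ nu) *m v).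
Proof.
case: M B0 Bs C0 A p => [//|n] _ _ _ A p _ _ _ _ _ A_ge0 _ _ _ _ _ A_irr _ p_lt compat.
move=> y nu y_gt0 /lt_conv_radius [r' y_lt_r' cvg_r'] _ z.
have tau_gt0 : (0 < tau)%N by apply: leq_ltn_trans (p_lt ord0).
set w := omega R tau ^+ nu.
have w_neq0 : w != 0 by rewrite expf_neq0 // -normr_eq0 norm_omega oner_eq0.
have w_tau : w ^+ tau = 1 by rewrite exprAC omega_expr_tau // expr1n.
have G_ge0 := Gamma_y_ge0 A_ge0 y_gt0 y_lt_r' cvg_r'.
have G_irr i j : reach (fun a b => 0 < Gamma_y A y a b) i j.
  exact: reach_mono (Gamma_y_gt0 A_ge0 y_gt0 y_lt_r' cvg_r') (A_irr i j).
have [r [v [v' [r_ge0 v_gt0 v'_gt0 Gv v'G]]]] := perron_frobenius G_ge0 G_irr.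
have norm_z : `|z| = y%:C.
  by rewrite normrM normrX norm_omega expr1n mulr1 norm_real_complex // ltW.
have y_neq0 : y%:C != 0 by rewrite fmorph_eq0 gt_eqF.
rewrite /is_mu /is_v norm_z /z [y%:C * _]mulrC mulfK // norm_real_complex ?ltW //.
have twist := period_twist w_tau compat.
rewrite divff // DeltaM1 mulrC (GammaStar_twist A_ge0 y_gt0 y_lt_r' cvg_r' w_neq0 twist).
rewrite GammaStar_real.
have [] := perron_vectors_similar G_ge0 G_irr r_ge0 v_gt0 v'_gt0 Gv v'G (DeltaM_unit p w_neq0).
by do 5!move=> ?; split; [|split; [|split; [|split]]].
Qed.
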